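(* Let $\kappa$ be a regular uncountable cardinal, let $J$ be a $\kappa$-complete ideal on $\kappa$ with $NS_\kappa \subseteq J$, and let $\eta$ be an infinite ordinal less than $Depth([\kappa]^\kappa, \searrow)$ (respectively, less than $Depth([\kappa]^\kappa, \nearrow)$). Suppose that $\clubsuit^{\rm ev}_\kappa[J]$ holds. Then there exists a descending (respectively, ascending) $(J, I_\kappa)$-tower of length $\eta$.
   Context: An ideal on $\kappa$ is a nonempty $J \subseteq P(\kappa)$ with $\kappa \notin J$, every bounded subset of $\kappa$ in $J$, $J$ closed under subsets and under unions of two members. $J^+ = P(\kappa)\setminus J$. $J$ is $\kappa$-complete if the union of fewer than $\kappa$ members of $J$ is in $J$. $I_\kappa$ is the ideal of bounded subsets of $\kappa$, $NS_\kappa$ the nonstationary ideal, $[\kappa]^\kappa$ the set of subsets of $\kappa$ of size $\kappa$, and $acc(\kappa)$ the set of nonzero limit ordinals below $\kappa$. $\clubsuit^{\rm ev}_\kappa[J]$ asserts the existence of $s_\alpha \subseteq \alpha$ with $\sup s_\alpha = \alpha$ for $\alpha \in acc(\kappa)$ such that $\{\alpha \in acc(\kappa) : \exists \beta < \alpha\, (s_\alpha \setminus \beta \subseteq A)\} \in J^+$ for all $A \in [\kappa]^\kappa$. For an ideal $J$ on $\kappa$, $Y \subseteq P(\kappa)$ and an ordinal $\delta$, a descending (respectively, ascending) $(J,Y)$-tower of length $\delta$ is a sequence $\langle A_\alpha : \alpha < \delta\rangle$ with each $A_\alpha \in J^+$ such that whenever $\alpha < \beta < \delta$: $A_\beta \setminus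 A_\alpha \in Y$ and $A_\alpha \setminus A_\beta \in J^+$ (respectively, $A_\alpha \setminus A_\beta \in Y$ and $A_\beta \setminus A_\alpha \in J^+$). $Depth([\kappa]^\kappa, \nearrow)$ (respectively, $Depth([\kappa]^\kappa, \searrow)$) is the least ordinal $\eta$ such that there is no ascending (respectively, descending) $(I_\kappa, I_\kappa)$-tower of length $\eta$. *)

(* Ordinals are modelled as types carrying a strict well-order;
   subsets of kappa as predicates K -> Prop; ideals as predicates on subsets. *)
From Stdlib Require Import List.

Set Implicit Arguments.
Unset Strict Implicit.

Definition is_wellorder (T : Type) (lt : T -> T -> Prop) : Prop :=
  (forall x, ~ lt x x) /\
  (forall x y z, lt x y -> lt y z -> lt x z) /\
  (forall x y, lt x y \/ x = y \/ lt y x) /\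
  well_founded lt.

Definition injective_fun (A B : Type) (f : A -> B) : Prop :=
  forall x y, f x = f y -> x = y.

Definition injects (A B : Type) : Prop := exists f : A -> B, injective_fun f.

Definition finite_type (T : Type) : Prop := exists l : list T, forall x, In x l.

Section Kappa.
Variables (K : Type) (lt : K -> K -> Prop).

Definition bounded (A : K -> Prop) : Prop := exists g, forall x, A x -> lt x g.

Definition size_kappa (A : K -> Prop) : Prop :=
  exists f : K -> K, injective_fun f /\ forall x, A (f x).

Definition regular_uncountable_cardinal : Prop :=
  is_wellorder lt /\
  (* initial ordinal: every proper initial segment has smaller cardinality *)
  (forall a, ~ exists f : K -> K, injective_fun f /\ forall x, lt (f x) a) /\
  ~ injects K nat /\
  (* regular: every unbounded subset has size kappa *)
  (forall X : K -> Prop, ~ bounded X -> size_kappa X).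

(* nonzero limit ordinals below kappa *)
Definition acc (a : K) : Prop :=
  (exists b, lt b a) /\ (forall b, lt b a -> exists d, lt b d /\ lt d a).

Definition is_ideal (J : (K -> Prop) -> Prop) : Prop :=
  (exists A, J A) /\
  ~ J (fun _ => True) /\
  (forall A, bounded A -> J A) /\
  (forall A B : K -> Prop, J A -> (forall x, B x -> A x) -> J B) /\
  (forall A B, J A -> J B -> J (fun x => A x \/ B x)).

Definition positive (J : (K -> Prop) -> Prop) (A : K -> Prop) : Prop := ~ J A.

(* union of fewer than kappa members of J is in J *)
Definition kappa_complete (J : (K -> Prop) -> Prop) : Prop :=
  forall (I : Type) (F : I -> K -> Prop),
    injects I K -> ~ injects K I ->
    (forall i, J (F i)) -> J (fun x => exists i, F i x).

Definition closed_set (C : K -> Prop) : Prop :=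
  forall g, acc g ->
    (forall a, lt a g -> exists b, C b /\ lt a b /\ lt b g) -> C g.

Definition club (C : K -> Prop) : Prop := closed_set C /\ ~ bounded C.

Definition nonstationary (A : K -> Prop) : Prop :=
  exists C, club C /\ forall x, C x -> ~ A x.

Definition contains_NS (J : (K -> Prop) -> Prop) : Prop :=
  forall A, nonstationary A -> J A.

Definition clubsuit_ev (J : (K -> Prop) -> Prop) : Prop :=
  exists s : K -> K -> Prop,
    (forall a, acc a ->
       (forall x, s a x -> lt x a) /\
       (forall b, lt b a -> exists x, s a x /\ lt b x)) /\
    (forall A, size_kappa A ->
       positive J (fun a => acc a /\
         exists b, lt b a /\ forall x, s a x -> ~ lt x b -> A x)).

Definition desc_tower (J Y : (K -> Prop) -> Prop)
    (D : Type) (ltD : D -> D -> Prop) (A : D -> K -> Prop) : Prop :=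
  (forall a, positive J (A a)) /\
  (forall a b, ltD a b ->
     Y (fun x => A b x /\ ~ A a x) /\ positive J (fun x => A a x /\ ~ A b x)).

Definition asc_tower (J Y : (K -> Prop) -> Prop)
    (D : Type) (ltD : D -> D -> Prop) (A : D -> K -> Prop) : Prop :=
  (forall a, positive J (A a)) /\
  (forall a b, ltD a b ->
     Y (fun x => A a x /\ ~ A b x) /\ positive J (fun x => A b x /\ ~ A a x)).

End Kappa.

(* (X, ltX) has order type <= that of (E, ltE): order-isomorphic to an initial
   segment of E *)
Definition ord_le (X E : Type) (ltX : X -> X -> Prop) (ltE : E -> E -> Prop) : Prop :=
  exists f : X -> E,
    (forall x y, ltX x y -> ltE (f x) (f y)) /\
    (forall e x, ltE e (f x) -> exists y, f y = e) .

(* eta < Depth([kappa]^kappa, \searrow): since Depth is the least ordinal with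
   no descending (I_kappa, I_kappa)-tower, this says every ordinal xi <= eta
   carries such a tower. *)
Definition below_depth_desc (K : Type) (lt : K -> K -> Prop)
    (E : Type) (ltE : E -> E -> Prop) : Prop :=
  forall (X : Type) (ltX : X -> X -> Prop), is_wellorder ltX -> ord_le ltX ltE ->
    exists A : X -> K -> Prop,
      desc_tower (bounded lt) (bounded lt) ltX A.

Definition below_depth_asc (K : Type) (lt : K -> K -> Prop)
    (E : Type) (ltE : E -> E -> Prop) : Prop :=
  forall (X : Type) (ltX : X -> X -> Prop), is_wellorder ltX -> ord_le ltX ltE ->
    exists A : X -> K -> Prop,
      asc_tower (bounded lt) (bounded lt) ltX A.

From Stdlib Require Import List Classical.

(* Fix a ladder system s witnessing clubsuit^ev_kappa[J] and send B ⊆ kappa to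
   the set T(B) of limits a whose ladder s_a is eventually contained in B.
   T is monotone, preserves intersections and T(∅) = ∅, so T(B \ C) ⊆ T(B) \ T(C);
   a limit above a bound of B \ C whose ladder is eventually in B has it eventually
   in C, so T(B) \ T(C) is bounded when B \ C is; and by clubsuit^ev (with
   regularity) T sends unbounded sets to J-positive sets.  Hence T maps a
   descending (ascending) (I_kappa, I_kappa)-tower of length eta, which exists as
   eta < Depth, to a descending (ascending) (J, I_kappa)-tower of length eta. *)

Section EventuallyIn.
Variables (K : Type) (lt : K -> K -> Prop) (s : K -> K -> Prop).

Definition eventually_in (B : K -> Prop) (a : K) : Prop :=
  acc lt a /\ exists b, lt b a /\ forall x, s a x -> ~ lt x b -> B x.

Lemma eventually_in_mono {B C : K -> Prop} {a : K} :
  (forall x, B x -> C x) -> eventually_in B a -> eventually_in C a.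
Proof.
  intros BC [Ha [b [ba Hb]]].
  split; [exact Ha|]. exists b; split; [exact ba|].
  intros x sx nx; apply BC, Hb; assumption.
Qed.

Lemma eventually_in_beyond {g a : K} :
  acc lt a -> lt g a -> eventually_in (fun x => ~ lt x g) a.
Proof.
  intros Ha ga. split; [exact Ha|]. exists g; split; [exact ga|].
  intros x _ nx; exact nx.
Qed.

Hypothesis lt_irrefl : forall x, ~ lt x x.
Hypothesis lt_trans : forall x y z, lt x y -> lt y z -> lt x z.
Hypothesis lt_total : forall x y, lt x y \/ x = y \/ lt y x.

Lemma lt_join_below {a b c : K} : lt a c -> lt b c ->
  exists m, lt m c /\ (forall x, lt x a -> lt x m) /\ (forall x, lt x b -> lt x m).
Proof.
  intros ac bc. destruct (lt_total a b) as [ab|[<-|ba]].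
  - exists b; split; [exact bc|]. split; eauto.
  - exists a; auto.
  - exists a; split; [exact ac|]. split; eauto.
Qed.

Lemma eventually_in_meet {B C : K -> Prop} {a : K} :
  eventually_in B a -> eventually_in C a -> eventually_in (fun x => B x /\ C x) a.
Proof.
  intros [Ha [b [ba Hb]]] [_ [c [ca Hc]]].
  destruct (lt_join_below ba ca) as [m [ma [bm cm]]].
  split; [exact Ha|]. exists m; split; [exact ma|].
  intros x sx nx. split; [apply Hb | apply Hc]; auto.
Qed.

Hypothesis s_cofinal : forall a b, acc lt a -> lt b a -> exists x, s a x /\ lt b x.

Lemma eventually_in_empty a : ~ eventually_in (fun _ => False) a.
Proof.
  intros [Ha [b [ba Hb]]].
  destruct (s_cofinal _ _ Ha ba) as [x [sx bx]].
  apply (Hb x sx). intro xb. exact (lt_irrefl _ (lt_trans _ _ _ bx xb)).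
Qed.

Lemma eventually_in_diff {B C : K -> Prop} {a : K} :
  eventually_in (fun x => B x /\ ~ C x) a ->
  eventually_in B a /\ ~ eventually_in C a.
Proof.
  intros HBC. split.
  - apply (eventually_in_mono (B := fun x => B x /\ ~ C x)); [tauto | exact HBC].
  - intro HC. apply (eventually_in_empty a).
    apply (eventually_in_mono (B := fun x => (B x /\ ~ C x) /\ C x)); [tauto|].
    apply eventually_in_meet; assumption.
Qed.

Hypothesis lt_no_max : forall g, exists h, lt g h.

Lemma eventually_in_bounded_diff {B C : K -> Prop} :
  bounded lt (fun x => B x /\ ~ C x) ->
  bounded lt (fun a => eventually_in B a /\ ~ eventually_in C a).
Proof.
  intros [g Hg]. destruct (lt_no_max g) as [h gh]. exists h.
  intros a [HB HC]. destruct (lt_total a g) as [ag|[->|ga]]; eauto.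
  exfalso. apply HC.
  apply (eventually_in_mono (B := fun x => B x /\ ~ lt x g)).
  - intros x [Bx nx]. apply NNPP; intro nC. exact (nx (Hg x (conj Bx nC))).
  - apply eventually_in_meet; [exact HB|].
    apply eventually_in_beyond; [exact (proj1 HB) | exact ga].
Qed.

Variable J : (K -> Prop) -> Prop.
Hypothesis J_mono : forall A B : K -> Prop, J A -> (forall x, B x -> A x) -> J B.
Hypothesis lt_regular : forall X, ~ bounded lt X -> size_kappa X.
Hypothesis s_guesses : forall A, size_kappa A -> positive J (eventually_in A).

Lemma eventually_in_unbounded_diff {B C : K -> Prop} :
  ~ bounded lt (fun x => B x /\ ~ C x) ->
  positive J (fun a => eventually_in B a /\ ~ eventually_in C a).
Proof.
  intros nb HJ. apply (s_guesses _ (lt_regular _ nb)).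
  eapply J_mono; [exact HJ|]. intro a; apply eventually_in_diff.
Qed.

Lemma desc_tower_eventually_in (E : Type) (ltE : E -> E -> Prop) (B : E -> K -> Prop) :
  desc_tower (bounded lt) (bounded lt) ltE B ->
  desc_tower J (bounded lt) ltE (fun e => eventually_in (B e)).
Proof.
  intros [Bpos Bdiff]. split.
  - intro e. exact (s_guesses _ (lt_regular _ (Bpos e))).
  - intros e f ef. destruct (Bdiff e f ef) as [bd ubd]. split.
    + exact (eventually_in_bounded_diff bd).
    + exact (eventually_in_unbounded_diff ubd).
Qed.

Lemma asc_tower_eventually_in (E : Type) (ltE : E -> E -> Prop) (B : E -> K -> Prop) :
  asc_tower (bounded lt) (bounded lt) ltE B ->
  asc_tower J (bounded lt) ltE (fun e => eventually_in (B e)).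
Proof.
  intros [Bpos Bdiff]. split.
  - intro e. exact (s_guesses _ (lt_regular _ (Bpos e))).
  - intros e f ef. destruct (Bdiff e f ef) as [bd ubd]. split.
    + exact (eventually_in_bounded_diff bd).
    + exact (eventually_in_unbounded_diff ubd).
Qed.

End EventuallyIn.

Lemma regular_uncountable_no_max {K : Type} {lt : K -> K -> Prop} :
  regular_uncountable_cardinal lt -> forall g, exists h, lt g h.
Proof.
  intros [_ [_ [uncountable regular]]] g. apply NNPP; intro gmax.
  assert (single_unbounded : ~ bounded lt (fun x => x = g)).
  { intros [h Hh]. apply gmax. exists h; auto. }
  destruct (regular _ single_unbounded) as [f [finj fg]].
  apply uncountable. exists (fun _ => 0). intros x y _.
  apply finj. rewrite (fg x), (fg y). reflexivity.
Qed.

Lemma ord_le_refl {E : Type} (ltE : E -> E -> Prop) : ord_le ltE ltE.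
Proof. exists (fun x => x); split; eauto. Qed.

Theorem theorem2p31 (K : Type) (lt : K -> K -> Prop) (J : (K -> Prop) -> Prop) :
  regular_uncountable_cardinal lt ->
  is_ideal lt J -> kappa_complete J -> contains_NS lt J ->
  clubsuit_ev lt J ->
  forall (E : Type) (ltE : E -> E -> Prop),
    is_wellorder ltE -> ~ finite_type E ->
    (below_depth_desc lt ltE ->
       exists A : E -> K -> Prop, desc_tower J (bounded lt) ltE A) /\
    (below_depth_asc lt ltE ->
       exists A : E -> K -> Prop, asc_tower J (bounded lt) ltE A).
Proof.
  intros Hkappa [_ [_ [_ [J_mono _]]]] _ _ [s [s_ladder s_guesses]] E ltE wE _.
  pose proof (regular_uncountable_no_max Hkappa) as no_max.
  destruct Hkappa as [[irr [trans [total _]]] [_ [_ regular]]].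
  assert (s_cofinal : forall a b, acc lt a -> lt b a -> exists x, s a x /\ lt b x)
    by (intros a b Ha; exact (proj2 (s_ladder a Ha) b)).
  split; intro below_depth;
    destruct (below_depth E ltE wE (ord_le_refl ltE)) as [B HB];
    eexists.
  - exact (desc_tower_eventually_in _ _ _ irr trans total s_cofinal no_max _ J_mono regular
             s_guesses _ _ _ HB).
  - exact (asc_tower_eventually_in _ _ _ irr trans total s_cofinal no_max _ J_mono regular
             s_guesses _ _ _ HB).
Qed.
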